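(* Let $P,Q$ be probability measures with $P\ll Q$, let $\beta>1$, let $E$ be measurable with $q:=Q(E)\in(0,1)$, and set $\mathcal H_\beta:=\mathcal H_\beta(P\Vert Q)$ and $$u_0:=\min\Big\{1,\ \big((1+(\beta-1)\mathcal H_\beta)\,q^{\beta-1}\big)^{1/\beta}\Big\}.$$ Then $$P(E)\le\Big(q^{\beta-1}\big[1+(\beta-1)\mathcal H_\beta-(1-q)^{1-\beta}(1-u_0)^\beta\big]_+\Big)^{1/\beta}.$$
   Context: For $P\ll Q$ and $\beta>1$, $\mathcal H_\beta(P\Vert Q):=\int \frac{(\mathrm dP/\mathrm dQ)^\beta-1}{\beta-1}\,\mathrm dQ$ (the power divergence of order $\beta$). $[x]_+:=\max\{x,0\}$. *)

From HB Require Import structures.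
From mathcomp Require Import all_boot all_order all_algebra.
From mathcomp Require Import all_classical all_reals all_analysis.
Set Implicit Arguments. Unset Strict Implicit. Unset Printing Implicit Defensive.
Import Order.TTheory GRing.Theory Num.Theory.
Local Open Scope ring_scope.
Local Open Scope classical_set_scope.
Local Open Scope charge_scope.

(* Power divergence of order beta:
   H_beta(P||Q) = \int ((dP/dQ)^beta - 1)/(beta - 1) dQ,
   with dP/dQ the library's Radon-Nikodym derivative (an extended-real
   valued function, finite everywhere when P << Q; it is nonnegative
   Q-a.e., so the choice of powR on negative values is irrelevant). *)
Definition power_div d (T : measurableType d) (R : realType)
  (P Q : probability T R) (beta : R) : \bar R :=
  (\int[Q]_x
     ((((fine (('d (charge_of_finite_measure P) '/d Q) x)) `^ beta - 1)
        / (beta - 1))%:E))%E.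

Definition pos_part (R : realType) (x : R) : R := Num.max x 0.

From HB Require Import structures.
From mathcomp Require Import all_boot all_order all_algebra.
From mathcomp Require Import all_classical all_reals all_analysis.
From mathcomp Require Import measurable_realfun.
From mathcomp Require Import ring lra.
Import Order.TTheory GRing.Theory Num.Theory.
Local Open Scope ring_scope.
Local Open Scope classical_set_scope.
Local Open Scope charge_scope.

(* Replacing dP/dQ by its averages on the two cells E and ~` E can only decrease
   H_beta.  On a cell A with Q(A) = s and P(A) = m, integrating the tangent line of
   x ^ beta at the average m / s gives
     \int_A ((dP/dQ)^beta - 1) / (beta - 1) dQ >= (s^(1-beta) m^beta - s) / (beta - 1),
   so with p = P(E),
     q^(1-beta) p^beta + (1-q)^(1-beta) (1-p)^beta <= 1 + (beta - 1) H_beta.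
   Dropping the second term yields p <= u0; as (1 - x)^beta decreases, that term is
   at least its value at u0, and solving for p^beta gives the bound. *)

Section power_facts.
Context {R : realType}.
Implicit Types a b m s x y : R.

Lemma powR_tangent_le {b a} x : 1 < b -> 0 <= a ->
  b * a `^ (b - 1) * x - (b - 1) * a `^ b <= x `^ b.
Proof.
move=> b1 a0; have b0 : 0 < b by lra.
have b10 : 0 < b - 1 by rewrite subr_gt0.
have s0 := powR_ge0 a (b - 1); have A0 := powR_ge0 a b.
have [x0|x0] := ltP x 0.
  have : b * a `^ (b - 1) * x <= 0.
    by apply: mulr_ge0_le0; [apply: mulr_ge0; lra | lra].
  have := powR_ge0 x b; nra.
(* Young's inequality with the conjugate exponents b and b / (b - 1). *)
have c0 : 0 < b / (b - 1) by rewrite divr_gt0.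
have := @conjugate_powR _ x (a `^ (b - 1)) b (b / (b - 1)) x0 s0 b0 c0.
rewrite -powRrM mulrCA divff ?mulr1 ?lt0r_neq0 // invf_div.
have -> : b^-1 + (b - 1) / b = 1 by field; rewrite lt0r_neq0.
move=> /(_ erefl); rewrite -(ler_pM2l b0).
have -> : b * (x `^ b / b + a `^ b * ((b - 1) / b)) = x `^ b + (b - 1) * a `^ b.
  by field; rewrite lt0r_neq0.
lra.
Qed.

Lemma powR_le_root b x y : 0 < b -> 0 <= x -> x `^ b <= y -> x <= y `^ (1 / b).
Proof.
move=> b0 x0 xy; have b1 : 0 <= 1 / b by rewrite divr_ge0 ?ltW.
have {1}<- : (x `^ b) `^ (1 / b) = x.
  by rewrite -powRrM mul1r divff ?powRr1 ?lt0r_neq0.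
by apply: ge0_ler_powR; rewrite ?nnegrE ?(le_trans (powR_ge0 _ _) xy) ?powR_ge0.
Qed.

Lemma mul_powR_div b {s m} : 0 < s -> 0 <= m -> s * (m / s) `^ b = s `^ (1 - b) * m `^ b.
Proof.
move=> s0 m0; have s0' := ltW s0.
rewrite powRM ?invr_ge0 // -(powR_inv1 s0') -powRrM mulN1r.
by rewrite mulrCA mulrC powRD ?lt0r_neq0 ?implybT // powRr1.
Qed.

Lemma le_pos_part x : x <= pos_part x.
Proof. by rewrite le_max lexx. Qed.

End power_facts.

Lemma binary_powR_bound (R : realType) (b q p K : R) :
  1 < b -> 0 < q -> 0 <= p <= 1 ->
  q `^ (1 - b) * p `^ b + (1 - q) `^ (1 - b) * (1 - p) `^ b <= K ->
  let u0 := Num.min 1 ((K * q `^ (b - 1)) `^ (1 / b)) in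
  p <= (q `^ (b - 1) * pos_part (K - (1 - q) `^ (1 - b) * (1 - u0) `^ b)) `^ (1 / b).
Proof.
move=> b1 q0 /andP[p0 p1] key; cbv zeta; set u0 := Num.min 1 _.
have b0 : 0 < b by lra.
set C := fun u => (1 - q) `^ (1 - b) * (1 - u) `^ b.
have qb0 : 0 <= q `^ (b - 1) := powR_ge0 _ _.
have qbK : q `^ (b - 1) * q `^ (1 - b) = 1.
  by rewrite -powRD ?lt0r_neq0 ?implybT // addrA subrK subrr powRr0.
have pb : p `^ b <= q `^ (b - 1) * (K - C p).
  have -> : p `^ b = q `^ (b - 1) * (q `^ (1 - b) * p `^ b) by rewrite mulrA qbK mul1r.
  by rewrite ler_wpM2l // lerBrDr.
have Cp0 : 0 <= C p by rewrite mulr_ge0 ?powR_ge0.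
have pu0 : p <= u0.
  rewrite le_min p1 /=; apply: powR_le_root => //.
  by rewrite mulrC (le_trans pb) // ler_wpM2l // gerBl.
have Cu0p : C u0 <= C p.
  have u01 : u0 <= 1 by rewrite ge_min lexx.
  by rewrite ler_wpM2l ?powR_ge0 //; apply: ge0_ler_powR; rewrite ?nnegrE; lra.
apply: powR_le_root => //; rewrite (le_trans pb) // ler_wpM2l //.
by apply: le_trans (le_pos_part _); rewrite lerD2l lerN2.
Qed.

Section integral_bounds.
Context {d : measure_display} {T : measurableType d} {R : realType}.

Lemma le_integral_measurable (mu : {measure set T -> \bar R}) (D : set T)
    (f g : T -> \bar R) :
  measurable D -> measurable_fun D f -> measurable_fun D g ->
  {in D, forall x, (f x <= g x)%E} ->
  (\int[mu]_(x in D) f x <= \int[mu]_(x in D) g x)%E.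
Proof.
move=> mD mf mg fg; rewrite integralE [leRHS]integralE leeB //.
- apply: ge0_le_integral => //; [exact: measurable_funepos.. |].
  by move=> x /mem_set; exact: funepos_le.
- apply: ge0_le_integral => //; [exact: measurable_funeneg.. |].
  by move=> x /mem_set; exact: funeneg_le.
Qed.

Lemma integral_affine (c1 c0 : R) {mu : {finite_measure set T -> \bar R}}
    {A : set T} {f : T -> R} {m s : R} :
  measurable A -> mu.-integrable A (EFin \o f) ->
  (\int[mu]_(x in A) (f x)%:E = m%:E)%E -> mu A = s%:E ->
  (\int[mu]_(x in A) (c1 * f x + c0)%:E = (c1 * m + c0 * s)%:E)%E.
Proof.
move=> mA intf fm muA; under eq_integral do rewrite EFinD EFinM.
rewrite integralD //; last exact: finite_measure_integrable_cst.
  rewrite EFinD !EFinM integralZl // fm integral_cst //.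
  by congr (_ + _ * _)%E; exact: muA.
exact: (integrableZl _ _ intf).
Qed.

Lemma integral_power_div_cell_ge (mu : {finite_measure set T -> \bar R}) (A : set T)
    (f : T -> R) (b m s : R) :
  1 < b -> measurable A -> mu.-integrable A (EFin \o f) ->
  (\int[mu]_(x in A) (f x)%:E = m%:E)%E -> mu A = s%:E -> 0 < s -> 0 <= m ->
  (((s `^ (1 - b) * m `^ b - s) / (b - 1))%:E <=
     \int[mu]_(x in A) (((f x) `^ b - 1) / (b - 1))%:E)%E.
Proof.
move=> b1 mA intf fm muA s0 m0; have b10 : 0 < b - 1 by rewrite subr_gt0.
have mf : measurable_fun A f by apply/measurable_EFinP; exact: (measurable_int _ intf).
(* Integrate the tangent line of [x `^ b] at the mean value [a] of [f] on [A]. *)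
set a := m / s; have a0 : 0 <= a by rewrite divr_ge0 // ltW.
set c1 := b * a `^ (b - 1) / (b - 1); set c0 := (- ((b - 1) * a `^ b) - 1) / (b - 1).
rewrite -(mul_powR_div b s0 m0) -/a.
have -> : (s * a `^ b - s) / (b - 1) = c1 * m + c0 * s.
  have ma : m = a * s by rewrite divfK ?lt0r_neq0.
  have aa : a `^ (b - 1) * a = a `^ b by rewrite mulrC mulr_powRB1 //; lra.
  by rewrite /c1 /c0 ma -aa; field; rewrite lt0r_neq0.
rewrite -(integral_affine c1 c0 mA intf fm muA); apply: le_integral_measurable => //.
- apply/measurable_EFinP; apply: measurable_funD => //; exact: measurable_funM.
- apply/measurable_EFinP; apply: measurable_funM => //; apply: measurable_funB => //.
  exact: measurableT_comp (measurable_powR b) mf.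
move=> x _; rewrite lee_fin.
have -> : c1 * f x + c0 = (b * a `^ (b - 1) * f x - (b - 1) * a `^ b - 1) / (b - 1).
  by rewrite /c1 /c0; field; rewrite lt0r_neq0.
rewrite ler_pM2r ?invr_gt0 //; have := powR_tangent_le (f x) b1 a0; lra.
Qed.

End integral_bounds.

Section power_div_partition.
Context {d : measure_display} {T : measurableType d} {R : realType}.
Variables (P Q : probability T R).
Hypothesis PQ : P `<< Q.

Definition dPdQ (x : T) : R := fine (('d (charge_of_finite_measure P) '/d Q) x).

Lemma dPdQE x : ('d (charge_of_finite_measure P) '/d Q) x = (dPdQ x)%:E.
Proof. by rewrite fineK //; exact: Radon_Nikodym_fin_num. Qed.

Lemma dPdQ_integrable : Q.-integrable setT (EFin \o dPdQ).
Proof.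
have -> : EFin \o dPdQ = 'd (charge_of_finite_measure P) '/d Q.
  by apply/funext => x; rewrite /= dPdQE.
exact: Radon_Nikodym_integrable.
Qed.

Lemma integral_dPdQ (A : set T) :
  measurable A -> P A = (\int[Q]_(x in A) (dPdQ x)%:E)%E.
Proof.
move=> mA; rewrite -[P A]/(charge_of_finite_measure P A).
rewrite (Radon_Nikodym_integral (PQ : charge_of_finite_measure P `<< Q) mA).
by apply: eq_integral => x _; exact: dPdQE.
Qed.

Lemma power_div_setUv (b : R) (E : set T) : measurable E ->
  power_div P Q b = (\int[Q]_(x in E) (((dPdQ x) `^ b - 1) / (b - 1))%:E +
                     \int[Q]_(x in ~` E) (((dPdQ x) `^ b - 1) / (b - 1))%:E)%E.
Proof.
move=> mE; rewrite /power_div -(setUv E) integral_setU //; last by apply/disj_setPCl.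
  by apply: measurableC.
rewrite setUv; apply/measurable_EFinP; apply: measurable_funM => //.
apply: measurable_funB => //.
apply: measurableT_comp (measurable_powR b) _.
by apply/measurable_EFinP; exact: (measurable_int _ dPdQ_integrable).
Qed.

Lemma power_div_ge_binary {b p q h : R} {E : set T} : 1 < b -> measurable E ->
  Q E = q%:E -> 0 < q < 1 -> P E = p%:E -> 0 <= p <= 1 -> power_div P Q b = h%:E ->
  q `^ (1 - b) * p `^ b + (1 - q) `^ (1 - b) * (1 - p) `^ b <= 1 + (b - 1) * h.
Proof.
move=> b1 mE QE /andP[q0 q1] PE /andP[p0 p1] Hdiv.
have cell (A : set T) (m s : R) : measurable A -> P A = m%:E -> Q A = s%:E ->
    0 < s -> 0 <= m ->
    (((s `^ (1 - b) * m `^ b - s) / (b - 1))%:E <=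
       \int[Q]_(x in A) (((dPdQ x) `^ b - 1) / (b - 1))%:E)%E.
  move=> mA PA QA s0 m0; apply: integral_power_div_cell_ge => //.
    exact: integrableS measurableT mA _ dPdQ_integrable.
  by rewrite -integral_dPdQ.
have mC : measurable (~` E) by apply: measurableC.
have PC : P (~` E) = (1 - p)%:E by rewrite probability_setC // PE.
have QC : Q (~` E) = (1 - q)%:E by rewrite probability_setC // QE.
have q10 : 0 < 1 - q by rewrite subr_gt0.
have p10 : 0 <= 1 - p by rewrite subr_ge0.
have := leeD (cell E p q mE PE QE q0 p0) (cell _ _ _ mC PC QC q10 p10).
rewrite -power_div_setUv // Hdiv -EFinD lee_fin -mulrDl ler_pdivrMr ?subr_gt0 //.
by move=> ?; lra.
Qed.

End power_div_partition.

Theorem mainTheorem3 (d : measure_display) (T : measurableType d) (R : realType)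
  (P Q : probability T R) (beta : R) (E : set T) (q : R) :
  P `<< Q -> 1 < beta -> measurable E -> Q E = q%:E -> 0 < q < 1 ->
  forall h : R, power_div P Q beta = h%:E ->
  let u0 := Num.min 1 (((1 + (beta - 1) * h) * q `^ (beta - 1)) `^ (1 / beta)) in
  (P E <= ((q `^ (beta - 1) *
            pos_part (1 + (beta - 1) * h - (1 - q) `^ (1 - beta) * (1 - u0) `^ beta))
           `^ (1 / beta))%:E)%E.
Proof.
move=> PQ b1 mE QE q01 h Hdiv.
have [p PE] : exists p, P E = p%:E by exists (fine (P E)); rewrite fineK ?fin_num_measure.
have p01 : 0 <= p <= 1 by rewrite -!lee_fin -PE measure_ge0 probability_le1.
cbv zeta; rewrite PE lee_fin; apply: binary_powR_bound => //; first by case/andP: q01.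
exact: (power_div_ge_binary _ _ PQ b1 mE QE q01 PE p01 Hdiv).
Qed.
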